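(* For every $k\in\mathbb{N}$, $k\ge 2$, there exists a family of $k$-uniform hypergraph properties $f_v$ on $v$ vertices such that $s(f_v)=\Theta(v^{\lceil k/2\rceil})$ and $bs(f_v)=\Theta(v^k)$. In particular, for even $k$, $bs(f_v)=\Theta(s(f_v)^2)$.
   Context: A $k$-uniform hypergraph on $[v]$ is identified with a string in $\{0,1\}^{\binom vk}$. A $k$-uniform hypergraph property is a Boolean function on such strings invariant under all permutations of $[v]$. $s(f)$ is the maximum over inputs of the number of single-bit flips changing the value; $bs(f)$ is the maximum over inputs $x$ of the maximum number of pairwise disjoint sets of coordinates whose simultaneous flip changes $f(x)$. *)

From mathcomp Require Import all_boot all_fingroup.
Set Implicit Arguments. Unset Strict Implicit. Unset Printing Implicit Defensive.

Definition edge (k v : nat) := {A : {set 'I_v} | #|A| == k}.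

(* A k-uniform hypergraph on [v]: a set of k-edges (= a string in {0,1}^binom v k). *)
Definition hgraph (k v : nat) := {set edge k v}.

Lemma card_imset_perm (v : nat) (s : {perm 'I_v}) (A : {set 'I_v}) :
  #|s @: A| = #|A|.
Proof. by apply: card_imset; apply: perm_inj. Qed.

Definition edge_act k v (s : {perm 'I_v}) (e : edge k v) : edge k v :=
  insubd e (s @: val e).

Definition relabel k v (s : {perm 'I_v}) (x : hgraph k v) : hgraph k v :=
  [set edge_act s e | e in x].

Definition hyper_property k v (f : hgraph k v -> bool) : Prop :=
  forall (s : {perm 'I_v}) (x : hgraph k v), f (relabel s x) = f x.

Definition flip (T : finType) (x S : {set T}) : {set T} :=
  [set e | (e \in x) (+) (e \in S)].

Definition sens_at (T : finType) (f : {set T} -> bool) (x : {set T}) : nat :=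
  #|[set e | f (flip x [set e]) != f x]|.
Definition sens (T : finType) (f : {set T} -> bool) : nat :=
  \max_(x : {set T}) sens_at f x.

Definition sens_blocks (T : finType) (f : {set T} -> bool) (x : {set T})
    (P : {set {set T}}) : bool :=
  trivIset P && [forall S in P, f (flip x S) != f x].
Definition bsens_at (T : finType) (f : {set T} -> bool) (x : {set T}) : nat :=
  \max_(P : {set {set T}} | sens_blocks f x P) #|P|.
Definition bsens (T : finType) (f : {set T} -> bool) : nat :=
  \max_(x : {set T}) bsens_at f x.

Definition theta_pow (g : nat -> nat) (m : nat) : Prop :=
  exists c C N : nat, 0 < c /\
    forall v, N <= v -> v ^ m <= c * g v /\ g v <= C * v ^ m.

Definition theta_sq (g h : nat -> nat) : Prop :=
  exists c C N : nat, 0 < c /\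
    forall v, N <= v -> h v ^ 2 <= c * g v /\ g v <= C * h v ^ 2.

From mathcomp Require Import all_boot all_fingroup.
From mathcomp Require Import zify.
Set Implicit Arguments. Unset Strict Implicit. Unset Printing Implicit Defensive.

(* The property is "the hypergraph has an isolated clique": a (k+1)-set A all of
   whose k-subsets are edges, while every other edge meets A in fewer than k/2
   vertices (k/2 rounded down).  At a positive input only edges meeting the witness
   in at least k/2 vertices are sensitive, O(v^(k - k/2)) of them; conversely, at a
   single clique every such edge not inside it is sensitive.  At a negative input a
   sensitive edge is the unique defect of some (k+1)-set, and the (k+1)-sets with a
   single missing edge (resp. a single extra edge) pairwise meet in fewer than k/2
   vertices, so there are O(v^(k/2)) of them.  Hence s = Theta(v^ceil(k/2)).  At the
   empty hypergraph, the cliques on a maximal family of (k+1)-sets pairwise sharing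
   fewer than k vertices are disjoint sensitive blocks; such a family has Omega(v^k)
   members, and bs never exceeds the number C(v, k) of coordinates. *)

Lemma addn_half_uphalf n : n./2 + uphalf n = n.
Proof. by rewrite uphalf_half; have := odd_double_half n; lia. Qed.

Lemma leq_exp2rW m n e : m <= n -> m ^ e <= n ^ e.
Proof. by move=> mn; elim: e => // e IH; rewrite !expnS leq_mul. Qed.

Lemma ffact_le_exp n j : n ^_ j <= n ^ j.
Proof.
elim: j => [|j IH]; first by rewrite ffactn0.
by rewrite ffactnSr expnSr leq_mul // leq_subr.
Qed.

Lemma bin_le_exp n j : 'C(n, j) <= n ^ j.
Proof.
apply: leq_trans (ffact_le_exp n j); rewrite -bin_ffact.
by rewrite leq_pmulr // fact_gt0.
Qed.

Lemma expn_sub_le_ffact n j : (n - j) ^ j <= n ^_ j.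
Proof.
elim: j => [|j IH]; first by rewrite expn0 ffactn0.
rewrite ffactnSr expnSr leq_mul //; last by lia.
by apply: leq_trans IH; apply: leq_exp2rW; lia.
Qed.

Lemma expn_le_bin v n j : 2 * (n + j) <= v -> v ^ j <= 2 ^ j * j`! * 'C(v - n, j).
Proof.
move=> hv; rewrite -mulnA [j`! * _]mulnC bin_ffact.
apply: leq_trans (leq_mul (leqnn _) (expn_sub_le_ffact _ _)).
by rewrite -expnMn leq_exp2rW //; lia.
Qed.

Section FinsetCounting.
Variable T : finType.
Implicit Types (A B S x : {set T}) (F : {set {set T}}).

Lemma leq_card_bigcup (I : finType) (P : pred I) (U : I -> {set T}) :
  #|\bigcup_(i | P i) U i| <= \sum_(i | P i) #|U i|.
Proof.
elim/big_rec2: _ => [|i n V _ IH]; first by rewrite cards0.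
by apply: leq_trans (leq_card_setU _ _) _; rewrite leq_add2l.
Qed.

Lemma exists_subset_card A n : n <= #|A| -> exists2 B : {set T}, B \subset A & #|B| = n.
Proof.
move=> nA; have : 0 < #|[set B : {set T} | B \subset A & #|B| == n]|.
  by rewrite cards_draws bin_gt0.
by case/card_gt0P => B; rewrite inE => /andP[sBA /eqP cB]; exists B.
Qed.

Lemma card_supsets S j :
  #|[set B : {set T} | S \subset B & #|B| == #|S| + j]| <= 'C(#|T|, j).
Proof.
set D := [set B : {set T} | _].
have injD : {in D &, injective (fun B => B :\: S)}.
  move=> B1 B2 /[!inE] /andP[sS1 _] /andP[sS2 _] E; apply/setP => i.
  have /setP/(_ i) := E; rewrite !inE.
  by case iS: (i \in S) => //=; rewrite (subsetP sS1) ?(subsetP sS2).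
rewrite -card_draws -(card_in_imset injD).
apply/subset_leq_card/subsetP => _ /imsetP[B /[!inE] /andP[sSB /eqP cB] ->].
by rewrite cardsDS // cB addKn.
Qed.

(* Pick a t-subset of each member: distinct members get distinct subsets. *)
Lemma card_family_small_intersections F t :
  {in F, forall A, t <= #|A|} -> {in F &, forall A B, A != B -> #|A :&: B| < t} ->
  #|F| <= 'C(#|T|, t).
Proof.
move=> cF dF.
pose sub A := odflt set0 [pick B : {set T} | B \subset A & #|B| == t].
have subP A : A \in F -> sub A \subset A /\ #|sub A| = t.
  move/cF => tA; rewrite /sub; case: pickP => [B /andP[sB /eqP cB] //|none].
  by have [B sB cB] := exists_subset_card tA; move: (none B); rewrite sB cB eqxx.
have injF : {in F &, injective sub}.
  move=> A B AF BF eqAB; apply/eqP/negPn/negP => /(dF A B AF BF).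
  rewrite ltnNge; apply/negP/negPn.
  have [sA <-] := subP A AF; have [sB _] := subP B BF.
  by apply: subset_leq_card; rewrite subsetI sA eqAB sB.
rewrite -card_draws -(card_in_imset injF).
apply/subset_leq_card/subsetP => _ /imsetP[A AF ->].
by have [_ cA] := subP A AF; rewrite inE cA.
Qed.

Lemma setD_gt0_card (A B : {set T}) :
  #|A| = #|B| -> A != B -> 0 < #|A :\: B|.
Proof.
move=> cAB; apply: contraNT; rewrite -eqn0Ngt cards_eq0 setD_eq0 => sAB.
by apply/eqP/setP/subset_cardP.
Qed.

Lemma in_flip1 x (g e : T) :
  (e \in flip x [set g]) = (if e == g then g \notin x else e \in x).
Proof. by rewrite /flip inE in_set1; case: eqP => [->|]; rewrite ?addbT ?addbF. Qed.

Lemma flip0x S : flip set0 S = S.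
Proof. by apply/setP => e; rewrite !inE. Qed.

Lemma flipx0 x : flip x set0 = x.
Proof. by apply/setP => e; rewrite !inE addbF. Qed.

Lemma bsens_le_card (f : {set T} -> bool) : bsens f <= #|T|.
Proof.
apply/bigmax_leqP => x _; apply/bigmax_leqP => P /andP[/eqP tP /forall_inP sensP].
have P0 : set0 \notin P by apply/negP => /sensP; rewrite flipx0 eqxx.
apply: leq_trans (max_card (cover P)); rewrite -tP -sum1_card.
apply: leq_sum => S SP; rewrite card_gt0; apply: contraNneq P0 => <-//.
Qed.

End FinsetCounting.

Lemma imset_perm_subset (T : finType) (s : {perm T}) (A B : {set T}) :
  (s @: A \subset s @: B) = (A \subset B).
Proof.
apply/idP/idP => [/subsetP sAB|]; last exact: imsetS.
apply/subsetP => i iA; rewrite -(mem_imset _ _ (@perm_inj _ s)).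
by apply: sAB; rewrite mem_imset //; apply: perm_inj.
Qed.

Lemma card_imset_permI (T : finType) (s : {perm T}) (A B : {set T}) :
  #|s @: A :&: s @: B| = #|A :&: B|.
Proof.
by rewrite -imsetI ?card_imset //; [apply: perm_inj | move=> i j _ _; apply: perm_inj].
Qed.

Section Packing.
Variables (T : finType) (n : nat).
Implicit Types (A B S : {set T}) (F : {set {set T}}).

Definition packing F :=
  [forall A in F, #|A| == n.+1] &&
  [forall A in F, forall B in F, (A != B) ==> (#|A :&: B| < n)].

Lemma packingP F : reflect
  ({in F, forall A, #|A| = n.+1} /\ {in F &, forall A B, A != B -> #|A :&: B| < n})
  (packing F).
Proof.
apply: (iffP andP) => [[/forall_inP cF /forall_inP dF]|[cF dF]]; split.
- by move=> A /cF /eqP.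
- by move=> A B AF BF; apply/implyP; move/forall_inP: (dF A AF); apply.
- by apply/forall_inP => A /cF ->.
- by apply/forall_inP => A AF; apply/forall_inP => B BF; apply/implyP; apply: dF.
Qed.

Lemma packing0 : packing set0.
Proof. by apply/packingP; split => A; rewrite inE. Qed.

Definition max_packing := [arg max_(F > set0 | packing F) #|F|].

Lemma max_packingP :
  packing max_packing /\ forall F, packing F -> #|F| <= #|max_packing|.
Proof. by rewrite /max_packing; case: arg_maxnP => [|F pF maxF]; first exact: packing0. Qed.

Lemma max_packing_covers B : #|B| = n.+1 ->
  exists2 A, A \in max_packing & n <= #|A :&: B|.
Proof.
move=> cB; have [/packingP[cF dF] maxF] := max_packingP.
apply/exists_inP; apply: contraT => /exists_inPn far.
have nB : B \notin max_packing.
  by apply/negP => /far; rewrite setIid cB leqnSn.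
suff /maxF : packing (B |: max_packing) by rewrite cardsU1 nB; lia.
apply/packingP; split => [A /setU1P[->|/cF]|] //.
move=> A A' /setU1P[->|AF] /setU1P[->|A'F]; rewrite ?eqxx // => nAA'.
- by rewrite setIC ltnNge far.
- by rewrite ltnNge far.
- exact: dF.
Qed.

(* Every (n+1)-set is an n-subset of a member plus one point. *)
Lemma card_max_packing : 'C(#|T|, n.+1) <= #|max_packing| * (n.+1 * #|T|).
Proof.
have [/packingP[cF _] _] := max_packingP.
pose sub_n A := [set S : {set T} | S \subset A & #|S| == n].
rewrite -card_draws.
apply: (@leq_trans #|\bigcup_(A in max_packing) \bigcup_(S in sub_n A)
                       [set B : {set T} | S \subset B & #|B| == #|S| + 1]|).
  apply/subset_leq_card/subsetP => B /[!inE] /eqP cB.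
  have [A AF nAB] := max_packing_covers cB.
  have [S sS cS] := exists_subset_card nAB.
  apply/bigcupP; exists A => //; apply/bigcupP; exists S.
    by rewrite inE cS eqxx (subset_trans sS) ?subsetIl.
  by rewrite inE cS cB addn1 eqxx (subset_trans sS) ?subsetIr.
apply: leq_trans (leq_card_bigcup _ _) _; rewrite -sum_nat_const.
apply: leq_sum => A AF; apply: leq_trans (leq_card_bigcup _ _) _.
rewrite -[n.+1]binSn -(cF A AF) -cards_draws -sum_nat_const; apply: leq_sum => S _.
by rewrite -[#|T| in X in _ <= X]bin1 card_supsets.
Qed.

End Packing.

Section IsolatedClique.
Variables (k v : nat).
Implicit Types (x : hgraph k v) (A B : {set 'I_v}) (e g : edge k v) (s : {perm 'I_v}).

Lemma card_edge_val e : #|val e| = k.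
Proof. exact/eqP/(valP e). Qed.

Lemma val_edge_act s e : val (edge_act s e) = s @: val e.
Proof. by rewrite /edge_act val_insubd card_imset_perm card_edge_val eqxx. Qed.

Lemma edge_actK s : cancel (@edge_act k v s) (edge_act s^-1%g).
Proof.
move=> e; apply: val_inj; rewrite !val_edge_act -imset_comp.
by rewrite (eq_imset _ (permK s)) imset_id.
Qed.

Lemma edge_actVK s : cancel (@edge_act k v s^-1%g) (edge_act s).
Proof. by move=> e; have := edge_actK s^-1%g e; rewrite invgK. Qed.

Lemma mem_relabel s x e : (e \in relabel s x) = (edge_act s^-1%g e \in x).
Proof.
apply/imsetP/idP => [[e' e'x ->]|ex]; first by rewrite edge_actK.
by exists (edge_act s^-1%g e); rewrite ?edge_actVK.
Qed.

Lemma relabelK s : cancel (@relabel k v s) (relabel s^-1%g).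
Proof. by move=> x; apply/setP => e; rewrite !mem_relabel invgK edge_actK. Qed.

Definition missing x A := [set e : edge k v | val e \subset A & e \notin x].
Definition forbidden A e := ~~ (val e \subset A) && (k./2 <= #|val e :&: A|).
Definition extra x A := [set e in x | forbidden A e].
Definition isolated_clique x A :=
  [&& #|A| == k.+1, missing x A == set0 & extra x A == set0].
Definition has_isolated_clique x := [exists A, isolated_clique x A].
Notation P := has_isolated_clique.

Lemma missing_relabel s x A e :
  (edge_act s e \in missing (relabel s x) (s @: A)) = (e \in missing x A).
Proof. by rewrite !inE mem_relabel edge_actK val_edge_act imset_perm_subset. Qed.

Lemma extra_relabel s x A e :
  (edge_act s e \in extra (relabel s x) (s @: A)) = (e \in extra x A).
Proof.
by rewrite !inE mem_relabel edge_actK /forbidden val_edge_act imset_perm_subset card_imset_permI.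
Qed.

Lemma isolated_clique_relabel s x A :
  isolated_clique x A -> isolated_clique (relabel s x) (s @: A).
Proof.
case/and3P=> cA /eqP mA /eqP eA; apply/and3P; split; first by rewrite card_imset_perm.
  by apply/eqP/setP => e; rewrite -[e](edge_actVK s) missing_relabel mA !inE.
by apply/eqP/setP => e; rewrite -[e](edge_actVK s) extra_relabel eA !inE.
Qed.

Lemma has_isolated_clique_sym : hyper_property has_isolated_clique.
Proof.
move=> s x; apply/idP/idP => /existsP[A iA]; apply/existsP.
  by exists (s^-1%g @: A); rewrite -(relabelK s x); apply: isolated_clique_relabel.
by exists (s @: A); apply: isolated_clique_relabel.
Qed.

Lemma half_le_missing x A e : e \in missing x A -> k./2 <= #|val e :&: A|.
Proof.
rewrite inE => /andP[/setIidPl -> _]; rewrite card_edge_val.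
by have := addn_half_uphalf k; lia.
Qed.

Lemma missing_notin_extra x y A e : e \in missing x A -> e \notin extra y A.
Proof. by rewrite !inE /forbidden => /andP[-> _]; rewrite andbF. Qed.

Lemma missing_flip1 x A g e :
  e != g -> (e \in missing (flip x [set g]) A) = (e \in missing x A).
Proof. by move=> /negbTE neg; rewrite !inE neg addbF. Qed.

Lemma extra_flip1 x A g e :
  e != g -> (e \in extra (flip x [set g]) A) = (e \in extra x A).
Proof. by move=> /negbTE neg; rewrite !inE neg addbF. Qed.

Lemma isolated_clique_flip_far x A g : #|val g :&: A| < k./2 ->
  isolated_clique (flip x [set g]) A = isolated_clique x A.
Proof.
move=> far.
have notg y : g \notin missing y A /\ g \notin extra y A.
  split; apply/negP; last by rewrite inE /forbidden leqNgt far !andbF.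
  by move/half_le_missing; rewrite leqNgt far.
rewrite /isolated_clique; suff [-> ->] : missing (flip x [set g]) A = missing x A /\
               extra (flip x [set g]) A = extra x A by [].
split; apply/setP => e; have [->|neg] := eqVneq e g.
- by case: (notg x) (notg (flip x [set g])) => /negbTE-> _ [/negbTE-> _].
- exact: missing_flip1.
- by case: (notg x) (notg (flip x [set g])) => _ /negbTE-> [_ /negbTE->].
- exact: extra_flip1.
Qed.

Lemma sensitive_near_isolated_clique x A g : isolated_clique x A ->
  P (flip x [set g]) != P x -> k./2 <= #|val g :&: A|.
Proof.
move=> iA sens; rewrite leqNgt; apply: contraTN sens => far.
have Px : P x by apply/existsP; exists A.
by rewrite Px negbK eqb_id; apply/existsP; exists A; rewrite isolated_clique_flip_far.
Qed.

Lemma card_edges_supset (S : {set 'I_v}) : #|S| + uphalf k = k ->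
  #|[set g : edge k v | S \subset val g]| <= 'C(v, uphalf k).
Proof.
move=> cS; rewrite -(card_imset _ val_inj) -[v in 'C(v, _)]card_ord.
apply: leq_trans (card_supsets S (uphalf k)); apply/subset_leq_card/subsetP.
by move=> _ /imsetP[g /[!inE] sg ->]; rewrite sg card_edge_val cS /=.
Qed.

Lemma card_near_edges A : #|A| = k.+1 ->
  #|[set g : edge k v | k./2 <= #|val g :&: A|]| <= 'C(k.+1, k./2) * 'C(v, uphalf k).
Proof.
move=> cA; pose D := [set S : {set 'I_v} | S \subset A & #|S| == k./2].
apply: (@leq_trans #|\bigcup_(S in D) [set g : edge k v | S \subset val g]|).
  apply/subset_leq_card/subsetP => g /[!inE] near.
  have [S sS cS] := exists_subset_card near; apply/bigcupP; exists S.
    by rewrite inE cS eqxx andbT (subset_trans sS) ?subsetIr.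
  by rewrite inE (subset_trans sS) ?subsetIl.
apply: leq_trans (leq_card_bigcup _ _) _.
rewrite -cA -cards_draws -sum_nat_const; apply: leq_sum => S /[!inE] /andP[_ /eqP cS].
by apply: card_edges_supset; rewrite cS addn_half_uphalf.
Qed.

Lemma sens_at_isolated_clique x A : isolated_clique x A ->
  sens_at P x <= 'C(k.+1, k./2) * 'C(v, uphalf k).
Proof.
move=> iA; have cA : #|A| = k.+1 by case/and3P: iA => /eqP.
apply: leq_trans (card_near_edges cA); apply/subset_leq_card/subsetP => g /[!inE].
exact: sensitive_near_isolated_clique.
Qed.

Definition one_missing x := [set A : {set 'I_v} |
  [&& #|A| == k.+1, extra x A == set0 & #|missing x A| <= 1]].
Definition one_extra x := [set A : {set 'I_v} |
  [&& #|A| == k.+1, missing x A == set0 & #|extra x A| <= 1]].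

Lemma isolated_clique_flip x A g :
  ~~ isolated_clique x A -> isolated_clique (flip x [set g]) A ->
  (A \in one_missing x) && (g \in missing x A) || (A \in one_extra x) && (g \in extra x A).
Proof.
move=> nA /and3P[cA /eqP mA /eqP eA].
have sub_g (S S' : {set edge k v}) :
    (forall e, e != g -> (e \in S') = (e \in S)) -> S' = set0 -> S \subset [set g].
  move=> eqS S'0; apply/subsetP => e eS; rewrite inE; apply: contraT => neg.
  by move: (eqS e neg); rewrite S'0 inE eS.
have mg := sub_g _ _ (@missing_flip1 x A g) mA.
have eg := sub_g _ _ (@extra_flip1 x A g) eA.
have le1 (S : {set edge k v}) : S \subset [set g] -> #|S| <= 1.
  by move/subset_leq_card; rewrite cards1.
have eq0 (S : {set edge k v}) : S \subset [set g] -> g \notin S -> S == set0.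
  move=> /subsetP sS gS; apply/eqP/setP => e; rewrite inE; apply/negbTE.
  by apply: contraNN gS => eS; have := sS e eS; rewrite inE => /eqP <-.
move: nA; rewrite /isolated_clique cA ![A \in _]inE => nA.
have [gm|gm] := boolP (g \in missing x A).
  by rewrite cA eq0 ?le1 // (missing_notin_extra _ gm).
rewrite (eq0 _ mg gm) /= in nA; rewrite cA (eq0 _ mg gm) le1 //= andbF /=.
by apply: contraNT nA => ge; apply: eq0.
Qed.

Lemma exists_facet A y : #|A| = k.+1 -> y \in A -> exists e : edge k v, val e = A :\ y.
Proof.
move=> cA yA; have cAy : #|A :\ y| == k by have := cardsD1 y A; rewrite yA cA; lia.
by exists (Sub (A :\ y) cAy : edge k v); rewrite SubK.
Qed.

Lemma two_facets A (Y : {set 'I_v}) (Q : pred (edge k v)) :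
  #|A| = k.+1 -> Y \subset A -> 1 < #|Y| ->
  (forall y e, y \in Y -> val e = A :\ y -> Q e) -> 1 < #|[set e | Q e]|.
Proof.
move=> cA /subsetP sYA /card_gt1P[y1 [y2 [y1Y y2Y y12]]] QY.
have [e1 ve1] := exists_facet cA (sYA _ y1Y); have [e2 ve2] := exists_facet cA (sYA _ y2Y).
apply/card_gt1P; exists e1, e2; rewrite !inE (QY y1) ?(QY y2) //; split=> //.
apply/eqP => /(congr1 val); rewrite ve1 ve2 => /setP/(_ y2).
by rewrite !inE eqxx eq_sym y12 sYA.
Qed.

Definition clique A : hgraph k v := [set e : edge k v | val e \subset A].

Lemma has_isolated_clique_clique A : #|A| = k.+1 -> P (clique A).
Proof.
move=> cA; apply/existsP; exists A; rewrite /isolated_clique cA eqxx /=.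
by apply/andP; split; apply/eqP/setP => e; rewrite !inE /forbidden; case: (_ \subset _).
Qed.

Lemma not_has_isolated_clique0 : ~~ P set0.
Proof.
apply/existsP => -[A /and3P[/eqP cA /eqP mA _]].
have [y yA] : exists y, y \in A by apply/card_gt0P; rewrite cA.
have [e ve] := exists_facet cA yA.
have : e \in missing set0 A by rewrite inE ve subD1set inE.
by rewrite mA inE.
Qed.

(* The cliques of a packing are pairwise disjoint blocks, each sensitive at the empty graph. *)
Lemma bsens_ge : #|max_packing 'I_v k| <= bsens P.
Proof.
have [/packingP[cF dF] _] := max_packingP 'I_v k.
have shared A1 A2 e : A1 \in max_packing 'I_v k -> A2 \in max_packing 'I_v k ->
    e \in clique A1 -> e \in clique A2 -> A1 = A2.
  move=> A1F A2F /[!inE] s1 s2; apply/eqP/negPn/negP => /(dF _ _ A1F A2F).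
  by rewrite ltnNge -(card_edge_val e) subset_leq_card // subsetI s1 s2.
have nonempty A : A \in max_packing 'I_v k -> exists e, e \in clique A.
  move=> AF; have [y yA] : exists y, y \in A by apply/card_gt0P; rewrite cF.
  by have [e ve] := exists_facet (cF A AF) yA; exists e; rewrite inE ve subD1set.
have cP : #|clique @: max_packing 'I_v k| = #|max_packing 'I_v k|.
  apply: card_in_imset => A1 A2 A1F A2F E.
  by have [e eA1] := nonempty _ A1F; apply: (shared _ _ e A1F A2F eA1); rewrite -E.
apply: leq_trans (leq_bigmax (set0 : hgraph k v)); rewrite -cP.
apply: (@leq_bigmax_cond _ (sens_blocks P set0) (fun Q => #|Q|)); apply/andP; split.
  apply/trivIsetP => _ _ /imsetP[A1 A1F ->] /imsetP[A2 A2F ->] nA12.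
  rewrite -setI_eq0; apply/eqP/setP => e; rewrite !inE.
  by apply/negP => /andP[e1 e2]; move: nA12; rewrite (shared _ _ e A1F A2F) ?eqxx ?inE.
apply/forall_inP => _ /imsetP[A AF ->].
by rewrite flip0x has_isolated_clique_clique ?cF // (negbTE not_has_isolated_clique0).
Qed.

Lemma card_edge : #|{: edge k v}| = 'C(v, k).
Proof.
rewrite card_sig -[v in 'C(v, _)]card_ord -card_draws.
by apply: eq_card => A; rewrite !inE.
Qed.

Hypothesis k_ge2 : 2 <= k.

Lemma half_lt_k : k./2 < k.
Proof. by have := addn_half_uphalf k; have := uphalf_gt0 k; lia. Qed.

Lemma two_forbidden_facets A B :
  #|A| = k.+1 -> #|B| = k.+1 -> A != B -> k./2 <= #|A :&: B| ->
  1 < #|[set e : edge k v | (val e \subset A) && forbidden B e]|.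
Proof.
move=> cA cB nAB hAB; have dAB := cardsID B A; rewrite cA in dAB.
have [lt1|le1] := ltnP 1 #|A :\: B|.
  apply: (two_facets cA (subsetDl A B) lt1) => y e /setDP[yA yB] ve.
  rewrite /forbidden ve subD1set /=; apply/andP; split.
    have : 0 < #|(A :\: B) :\ y| by have := cardsD1 y (A :\: B); rewrite !inE yA yB; lia.
    by case/card_gt0P => z /[!inE] /and3P[zy zB zA]; apply/subsetPn; exists z; rewrite ?inE ?zy.
  suff -> : (A :\ y) :&: B = A :&: B by [].
  by apply/setP => i; rewrite !inE; case: (i =P y) => [->|] /=; rewrite ?(negbTE yB) ?andbF.
have cAB : #|A :&: B| = k by have := setD_gt0_card (etrans cA (esym cB)) nAB; lia.
have [a /setDP[aA aB]] : exists a, a \in A :\: B.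
  by apply/card_gt0P/(setD_gt0_card (etrans cA (esym cB))).
apply: (two_facets cA (subsetIl A B)) => [|y e /setIP[yA yB] ve]; first by rewrite cAB.
rewrite /forbidden ve subD1set /=; apply/andP; split.
  by apply/subsetPn; exists a; rewrite // !inE aA andbT; apply: contraNneq aB => ->.
have := cardsD1 y (A :&: B); rewrite !inE yA yB cAB /= setIDAC.
by have := half_lt_k; lia.
Qed.

Lemma one_missing_sep x :
  {in one_missing x &, forall A B, A != B -> #|A :&: B| < k./2}.
Proof.
move=> A B /[!inE] /and3P[/eqP cA _ mA] /and3P[/eqP cB /eqP eB _] nAB.
rewrite ltnNge; apply: contraTN mA => hAB; rewrite -ltnNge.
apply: leq_trans (two_forbidden_facets cA cB nAB hAB) _.
apply/subset_leq_card/subsetP => e /[!inE] /andP[sA fB]; rewrite sA /=.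
apply/negP => ex; have : e \in extra x B by rewrite inE ex fB.
by rewrite eB inE.
Qed.

Lemma one_extra_sep x :
  {in one_extra x &, forall A B, A != B -> #|A :&: B| < k./2}.
Proof.
move=> A B /[!inE] /and3P[/eqP cA /eqP mA _] /and3P[/eqP cB _ eB] nAB.
rewrite ltnNge; apply: contraTN eB => hAB; rewrite -ltnNge.
apply: leq_trans (two_forbidden_facets cA cB nAB hAB) _.
apply/subset_leq_card/subsetP => e /[!inE] /andP[sA fB]; rewrite fB andbT.
apply: contraT => ex; have : e \in missing x A by rewrite inE ex sA.
by rewrite mA inE.
Qed.

Lemma card_one_missing x : #|one_missing x| <= 'C(v, k./2).
Proof.
rewrite -[v in 'C(v, _)]card_ord; apply: card_family_small_intersections (@one_missing_sep x).
by move=> A /[!inE] /and3P[/eqP -> _ _]; have := half_lt_k; lia.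
Qed.

Lemma card_one_extra x : #|one_extra x| <= 'C(v, k./2).
Proof.
rewrite -[v in 'C(v, _)]card_ord; apply: card_family_small_intersections (@one_extra_sep x).
by move=> A /[!inE] /and3P[/eqP -> _ _]; have := half_lt_k; lia.
Qed.

Lemma sens_at_no_isolated_clique x : ~~ P x -> sens_at P x <= 2 * 'C(v, k./2).
Proof.
move=> nPx.
apply: (@leq_trans #|(\bigcup_(A in one_missing x) missing x A) :|:
                     (\bigcup_(A in one_extra x) extra x A)|).
  apply/subset_leq_card/subsetP => g /[!inE]; rewrite (negbTE nPx) eqbF_neg negbK.
  case/existsP => A iA; have nA : ~~ isolated_clique x A.
    by apply: contraNN nPx => iA'; apply/existsP; exists A.
  by case/orP: (isolated_clique_flip nA iA) => /andP[AF gA];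
    apply/orP; [left | right]; apply/bigcupP; exists A.
apply: leq_trans (leq_card_setU _ _) _; rewrite mul2n -addnn.
apply: leq_add; apply: leq_trans (leq_card_bigcup _ _) _.
  apply: leq_trans (card_one_missing x); rewrite -sum1_card.
  by apply: leq_sum => A /[!inE] /and3P[].
apply: leq_trans (card_one_extra x); rewrite -sum1_card.
by apply: leq_sum => A /[!inE] /and3P[].
Qed.

Lemma sens_le : 0 < v -> sens P <= ('C(k.+1, k./2) + 2) * v ^ uphalf k.
Proof.
move=> v_gt0; apply/bigmax_leqP => x _; rewrite mulnDl.
have [/existsP[A iA]|nPx] := boolP (P x).
  apply: leq_trans (sens_at_isolated_clique iA) (leq_trans _ (leq_addr _ _)).
  by rewrite leq_mul2l bin_le_exp orbT.
apply: leq_trans (sens_at_no_isolated_clique nPx) (leq_trans _ (leq_addl _ _)).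
rewrite leq_mul2l (leq_trans (bin_le_exp _ _)) ?orbT // leq_pexp2l //.
by rewrite uphalf_half leq_addl.
Qed.

Lemma flip_clique_forbidden A0 g : #|A0| = k.+1 -> forbidden A0 g ->
  ~~ P (flip (clique A0) [set g]).
Proof.
move=> cA0 fg; apply/existsP => -[A /and3P[/eqP cA /eqP mA /eqP eA]].
have [eqAA0|nAA0] := eqVneq A A0.
  have : g \in extra (flip (clique A0) [set g]) A.
    rewrite [_ \in extra _ _]inE in_flip1 eqxx [g \in clique _]inE eqAA0 fg andbT.
    by case/andP: fg.
  by rewrite eA inE.
have [a /setDP[aA aA0]] : exists a, a \in A :\: A0.
  by apply/card_gt0P/(setD_gt0_card (etrans cA (esym cA0))).
have : 1 < #|[set e : edge k v | e == g]|.
  apply: (two_facets cA (subD1set A a)) => [|y e /setD1P[ya yA] ve].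
    by have := cardsD1 a A; rewrite aA cA; lia.
  have : e \in flip (clique A0) [set g].
    apply: contraT => ne; have : e \in missing (flip (clique A0) [set g]) A.
      by rewrite [_ \in missing _ _]inE ve subD1set ne.
    by rewrite mA inE.
  rewrite in_flip1 !inE ve; case: eqP => // _ /subsetP/(_ a).
  by rewrite !inE eq_sym ya aA (negbTE aA0) => /(_ isT).
by rewrite (_ : [set e | e == g] = [set g]) ?cards1 //; apply/setP => e; rewrite !inE.
Qed.

Lemma sens_ge : k.+1 <= v -> 'C(v - k.+1, uphalf k) <= sens P.
Proof.
move=> kv.
have [A0 _ cA0] : exists2 A0 : {set 'I_v}, A0 \subset setT & #|A0| = k.+1.
  by apply: exists_subset_card; rewrite cardsT card_ord.
have [T0 sT0 cT0] : exists2 T0 : {set 'I_v}, T0 \subset A0 & #|T0| = k./2.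
  by apply: exists_subset_card; rewrite cA0; have := half_lt_k; lia.
have cA0C : #|~: A0| = v - k.+1 by have := cardsC A0; rewrite cA0 card_ord; lia.
apply: leq_trans (leq_bigmax (clique A0)).
rewrite -cA0C -cards_draws; apply: leq_trans (leq_imset_card (fun g => val g :\: T0) _).
apply/subset_leq_card/subsetP => U /[!inE] /andP[sU /eqP cU].
have dTU : [disjoint T0 & U].
  by apply: disjointWl sT0 _; rewrite disjoint_sym disjoints_subset.
have cTU : #|T0 :|: U| == k.
  by rewrite cardsU (disjoint_setI0 dTU) cards0 subn0 cT0 cU addn_half_uphalf.
apply/imsetP; exists (Sub (T0 :|: U) cTU : edge k v); last first.
  by rewrite SubK setDUl setDv set0U; apply/esym/setDidPl; rewrite disjoint_sym.
rewrite inE has_isolated_clique_clique // eqb_id flip_clique_forbidden // /forbidden SubK.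
apply/andP; split; last by rewrite -cT0 subset_leq_card // subsetI subsetUl.
have [u uU] : exists u, u \in U by apply/card_gt0P; rewrite cU uphalf_gt0; lia.
by apply/subsetPn; exists u; rewrite ?inE ?uU ?orbT // -in_setC (subsetP sU).
Qed.

End IsolatedClique.

Lemma theta_sq_of_theta_pow (s b : nat -> nat) m :
  theta_pow s m -> theta_pow b (m * 2) -> theta_sq b s.
Proof.
move=> [c1 [C1 [N1 [c1_gt0 H1]]]] [c2 [C2 [N2 [c2_gt0 H2]]]].
exists (C1 ^ 2 * c2 + 1), (C2 * c1 ^ 2), (maxn N1 N2); split; first by rewrite addn1.
move=> v; rewrite geq_max => /andP[/H1[l1 u1] /H2[l2 u2]]; split.
  apply: leq_trans (leq_exp2rW 2 u1) _; rewrite expnMn -expnM.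
  apply: leq_trans (_ : C1 ^ 2 * (c2 * b v) <= _); first by rewrite leq_mul2l l2 orbT.
  by rewrite mulnA leq_mul2r leq_addr orbT.
apply: leq_trans u2 _; rewrite -mulnA leq_mul2l expnM -expnMn.
by rewrite leq_exp2rW ?orbT.
Qed.

Lemma theta_pow_sens k : 2 <= k ->
  theta_pow (fun v => sens (@has_isolated_clique k v)) (uphalf k).
Proof.
move=> k_ge2; exists (2 ^ uphalf k * (uphalf k)`!), ('C(k.+1, k./2) + 2), (2 * (k.+1 + uphalf k)).
split; first by rewrite muln_gt0 expn_gt0 fact_gt0.
move=> v hv; split; last by apply: sens_le; lia.
by apply: leq_trans (expn_le_bin hv) _; rewrite leq_mul2l sens_ge ?orbT //; lia.
Qed.

Lemma theta_pow_bsens k : 2 <= k ->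
  theta_pow (fun v => bsens (@has_isolated_clique k v)) k.
Proof.
move=> k_ge2; exists (2 ^ k.+1 * k.+1`! * k.+1), 1, (2 * k.+1).
split; first by rewrite !muln_gt0 expn_gt0 fact_gt0.
move=> v hv; split; last first.
  by rewrite mul1n (leq_trans (bsens_le_card _)) // card_edge bin_le_exp.
have v_gt0 : 0 < v by lia.
rewrite -(leq_pmul2l v_gt0) -expnS.
apply: leq_trans (expn_le_bin (n := 0) _) _; first by lia.
rewrite subn0 -[v in 'C(v, _)]card_ord.
apply: leq_trans (leq_mul (leqnn _) (card_max_packing _ _)) _.
apply: leq_trans (leq_mul (leqnn _) (leq_mul (@bsens_ge k v) (leqnn _))) _.
by rewrite card_ord; nia.
Qed.

Theorem corollary4p5 (k : nat) (hk : 2 <= k) :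
  exists f : forall v : nat, hgraph k v -> bool,
    (forall v, hyper_property (f v)) /\
    theta_pow (fun v => sens (f v)) (uphalf k) /\
    theta_pow (fun v => bsens (f v)) k /\
    (~~ odd k -> theta_sq (fun v => bsens (f v)) (fun v => sens (f v))).
Proof.
exists (fun v => @has_isolated_clique k v).
split; first by move=> v; apply: has_isolated_clique_sym.
split; first exact: theta_pow_sens.
split; first exact: theta_pow_bsens.
move=> k_even; apply: (theta_sq_of_theta_pow (theta_pow_sens hk)).
by rewrite muln2 even_uphalfK //; apply: theta_pow_bsens.
Qed.
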